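(* Let $\mathbb{R}^4$ have coordinates $(x_1,y_1,x_2,y_2)$ and consider symplectic forms $\omega_1 = f_1(x_1,y_1)\,dx_1\wedge dy_1 + f_2(x_2,y_2)\,dx_2\wedge dy_2$ and $\omega_2 = g_1(x_1,y_1)\,dx_1\wedge dy_1 + g_2(x_2,y_2)\,dx_2\wedge dy_2$, where $f_1,f_2,g_1,g_2$ are smooth and nowhere vanishing. Let $\varphi = (\varphi^1,\varphi^2,\varphi^3,\varphi^4)\in\operatorname{Symp}(\mathbb{R}^4,\omega_{\mathrm{std}})$ with $\varphi^*\omega_1 = \omega_2$. Then for each $x\in\mathbb{R}^4$, either $f_1(\varphi^1(x),\varphi^2(x)) = g_1(x_1,y_1)$ and $f_2(\varphi^3(x),\varphi^4(x)) = g_2(x_2,y_2)$, or $f_1(\varphi^1(x),\varphi^2(x)) = g_2(x_2,y_2)$ and $f_2(\varphi^3(x),\varphi^4(x)) = g_1(x_1,y_1)$.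
   Context: $\omega_{\mathrm{std}} = dx_1\wedge dy_1 + dx_2\wedge dy_2$. $\operatorname{Symp}(\mathbb{R}^4,\omega_{\mathrm{std}})$ is the set of diffeomorphisms $\varphi$ of $\mathbb{R}^4$ with $\varphi^*\omega_{\mathrm{std}} = \omega_{\mathrm{std}}$, where $(\varphi^*\omega)(x)(v,w) = \omega(\varphi(x))(d\varphi_x v, d\varphi_x w)$. *)

(* R : realType, points of R^4 are row vectors 'rV[R]_4
   with coordinates (x1, y1, x2, y2) = entries 0,1,2,3. *)
From HB Require Import structures.
From mathcomp Require Import all_boot all_order all_algebra.
From mathcomp Require Import all_classical all_reals all_analysis.
Set Implicit Arguments. Unset Strict Implicit. Unset Printing Implicit Defensive.
Import Order.TTheory GRing.Theory Num.Theory.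
Import numFieldNormedType.Exports.
Local Open Scope ring_scope.

Section Defs.
Context {R : realType}.

Definition pcoord {n : nat} (v : 'rV[R]_n.+1) (k : nat) : R := v ord0 (inord k).

Fixpoint Ck {n : nat} (k : nat) (f : 'rV[R]_n -> R) : Prop :=
  match k with
  | 0 => continuous f
  | k'.+1 => (forall x, differentiable f x) /\
             forall i : 'I_n, Ck k' (fun x => 'D_(delta_mx 0 i) f x)
  end.

Definition smooth_fun {n : nat} (f : 'rV[R]_n -> R) : Prop := forall k, Ck k f.

Definition smooth_map {n m : nat} (F : 'rV[R]_n -> 'rV[R]_m) : Prop :=
  forall j : 'I_m, smooth_fun (fun x => F x ord0 j).

Definition smooth2 (f : R -> R -> R) : Prop :=
  smooth_fun (fun p : 'rV[R]_2 => f (pcoord p 0) (pcoord p 1)).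

Definition diffeo {n : nat} (phi : 'rV[R]_n -> 'rV[R]_n) : Prop :=
  smooth_map phi /\
  exists psi : 'rV[R]_n -> 'rV[R]_n,
    [/\ smooth_map psi, cancel phi psi & cancel psi phi].

Definition form4 := 'rV[R]_4 -> 'rV[R]_4 -> 'rV[R]_4 -> R.

Definition dx1dy1 (v w : 'rV[R]_4) : R := pcoord v 0 * pcoord w 1 - pcoord v 1 * pcoord w 0.
Definition dx2dy2 (v w : 'rV[R]_4) : R := pcoord v 2 * pcoord w 3 - pcoord v 3 * pcoord w 2.

Definition split_form (f1 f2 : R -> R -> R) : form4 :=
  fun p v w => f1 (pcoord p 0) (pcoord p 1) * dx1dy1 v w
             + f2 (pcoord p 2) (pcoord p 3) * dx2dy2 v w.

Definition omega_std : form4 := split_form (fun _ _ => 1) (fun _ _ => 1).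

Definition pullback (phi : 'rV[R]_4 -> 'rV[R]_4) (omega : form4) : form4 :=
  fun x v w => omega (phi x) ('d phi x v) ('d phi x w).

Definition is_symp_std (phi : 'rV[R]_4 -> 'rV[R]_4) : Prop :=
  diffeo phi /\ pullback phi omega_std = omega_std.

End Defs.

(* At a point x put L := dphi_x, alpha := L^*(dx1/\dy1) and beta := L^*(dx2/\dy2).
   Both are pullbacks of decomposable forms, so alpha/\alpha = beta/\beta = 0.
   The two hypotheses give alpha + beta = dx1/\dy1 + dx2/\dy2 and
   a alpha + b beta = c dx1/\dy1 + d dx2/\dy2, with a, b the values of f1, f2 at
   phi x and c, d those of g1, g2 at x.  If a = b then c = d = a.  Otherwise
   alpha and beta are combinations of dx1/\dy1 and dx2/\dy2 only, and
   alpha/\alpha = 0 forces one of the two coefficients of alpha to vanish (and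
   likewise for beta), so (a, b) is (c, d) or (d, c). *)
From HB Require Import structures.
From mathcomp Require Import all_boot all_order all_algebra.
From mathcomp Require Import all_classical all_reals all_analysis.
From mathcomp Require Import ring.
Import Order.TTheory GRing.Theory Num.Theory.
Import numFieldNormedType.Exports.
Local Open Scope ring_scope.

Lemma eq0_of_distinct_weights (R : idomainType) (a b p q : R) :
  a != b -> p + q = 0 -> a * p + b * q = 0 -> p = 0 /\ q = 0.
Proof.
move=> neq_ab pq0 apbq0.
have q_eq : q = - p by apply/eqP; rewrite -addr_eq0 addrC pq0.
have : (a - b) * p = 0 by rewrite -apbq0 q_eq; ring.
move/eqP; rewrite mulf_eq0 subr_eq0 (negPf neq_ab) /= => /eqP p0.
by rewrite q_eq p0 oppr0.
Qed.

Lemma weights_eq_or_swap (R : idomainType) (a b c d p q p' q' : R) :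
  p + q = 1 -> p' + q' = 1 -> a * p + b * q = c -> a * p' + b * q' = d ->
  p * p' = 0 -> q * q' = 0 -> (a = c /\ b = d) \/ (a = d /\ b = c).
Proof.
move=> pq1 pq1' ac bd /eqP; rewrite mulf_eq0 => /orP[] /eqP p0 /eqP.
- have q1 : q = 1 by rewrite -pq1 p0 add0r.
  rewrite q1 mul1r => /eqP q0'.
  have p1' : p' = 1 by rewrite -pq1' q0' addr0.
  by right; rewrite -ac -bd p0 q1 p1' q0'; split; ring.
- have q1' : q' = 1 by rewrite -pq1' p0 add0r.
  rewrite q1' mulr1 => /eqP q0.
  have p1 : p = 1 by rewrite -pq1 q0 addr0.
  by left; rewrite -ac -bd p1 q0 p0 q1'; split; ring.
Qed.

Section SplitForms.
Variable R : realType.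

Lemma pcoord_delta (n i k : nat) : (i <= n)%N -> (k <= n)%N ->
  pcoord ('e_(inord i) : 'rV[R]_n.+1) k = (i == k)%:R.
Proof.
by move=> hi hk; rewrite /pcoord mxE /= -(inj_eq val_inj) /= !inordK // eq_sym.
Qed.

(* [plucker alpha v1 v2 v3 v4 = 0] for all [v]'s says [alpha /\ alpha = 0]. *)
Definition plucker (alpha : 'rV[R]_4 -> 'rV[R]_4 -> R) (v1 v2 v3 v4 : 'rV[R]_4) :=
  alpha v1 v2 * alpha v3 v4 - alpha v1 v3 * alpha v2 v4
  + alpha v1 v4 * alpha v2 v3.

Lemma plucker_dx1dy1 (L : 'rV[R]_4 -> 'rV[R]_4) v1 v2 v3 v4 :
  plucker (fun v w => dx1dy1 (L v) (L w)) v1 v2 v3 v4 = 0.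
Proof. by rewrite /plucker /dx1dy1; ring. Qed.

Lemma plucker_dx2dy2 (L : 'rV[R]_4 -> 'rV[R]_4) v1 v2 v3 v4 :
  plucker (fun v w => dx2dy2 (L v) (L w)) v1 v2 v3 v4 = 0.
Proof. by rewrite /plucker /dx2dy2; ring. Qed.

Lemma split_weights_eq_or_swap (alpha beta : 'rV[R]_4 -> 'rV[R]_4 -> R)
    (a b c d : R) :
  (forall v w, alpha v w + beta v w = dx1dy1 v w + dx2dy2 v w) ->
  (forall v w, a * alpha v w + b * beta v w = c * dx1dy1 v w + d * dx2dy2 v w) ->
  (forall v1 v2 v3 v4, plucker alpha v1 v2 v3 v4 = 0) ->
  (forall v1 v2 v3 v4, plucker beta v1 v2 v3 v4 = 0) ->
  (a = c /\ b = d) \/ (a = d /\ b = c).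
Proof.
pose e i : 'rV[R]_4 := 'e_(inord i).
move=> sum_eq wsum_eq dec_alpha dec_beta.
have sum_e i j := sum_eq (e i) (e j).
have wsum_e i j := wsum_eq (e i) (e j).
move: (sum_e 0 1)%N (sum_e 2 3)%N (wsum_e 0 1)%N (wsum_e 2 3)%N.
rewrite /dx1dy1 /dx2dy2 !pcoord_delta //= !(mulr0, mulr1, subr0, addr0, add0r).
move=> sum01 sum23 wsum01 wsum23.
have [eq_ab|neq_ab] := eqVneq a b.
  by subst b; left; rewrite -wsum01 -wsum23 -!mulrDr sum01 sum23 mulr1.
have off_diag i j : (i < 2)%N -> (2 <= j < 4)%N ->
    alpha (e i) (e j) = 0 /\ beta (e i) (e j) = 0.
  move=> hi hj.
  have [dx1dy1_0 dx2dy2_0] : dx1dy1 (e i) (e j) = 0 /\ dx2dy2 (e i) (e j) = 0.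
    case: i hi => [|[|//]] _; case: j hj => [|[|[|[|//]]]] // _;
    by rewrite /dx1dy1 /dx2dy2 !pcoord_delta //= !(mulr0, mul0r, subr0).
  apply: eq0_of_distinct_weights neq_ab _ _.
    by rewrite sum_e dx1dy1_0 dx2dy2_0 addr0.
  by rewrite wsum_e dx1dy1_0 dx2dy2_0 !mulr0 addr0.
have [a02 b02] := off_diag 0%N 2%N erefl erefl.
have [a03 b03] := off_diag 0%N 3%N erefl erefl.
have [a12 b12] := off_diag 1%N 2%N erefl erefl.
have [a13 b13] := off_diag 1%N 3%N erefl erefl.
move: (dec_alpha (e 0) (e 1) (e 2) (e 3)) (dec_beta (e 0) (e 1) (e 2) (e 3)).
rewrite /plucker a02 a03 a12 a13 b02 b03 b12 b13 !mul0r !subr0 !addr0.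
exact: weights_eq_or_swap.
Qed.

End SplitForms.

Theorem lemma6p1 (R : realType) (f1 f2 g1 g2 : R -> R -> R)
  (phi : 'rV[R]_4 -> 'rV[R]_4) :
  smooth2 f1 -> smooth2 f2 -> smooth2 g1 -> smooth2 g2 ->
  (forall a b, f1 a b != 0) -> (forall a b, f2 a b != 0) ->
  (forall a b, g1 a b != 0) -> (forall a b, g2 a b != 0) ->
  is_symp_std phi ->
  pullback phi (split_form f1 f2) = split_form g1 g2 ->
  forall x : 'rV[R]_4,
    (f1 (pcoord (phi x) 0) (pcoord (phi x) 1) = g1 (pcoord x 0) (pcoord x 1) /\
     f2 (pcoord (phi x) 2) (pcoord (phi x) 3) = g2 (pcoord x 2) (pcoord x 3))
    \/
    (f1 (pcoord (phi x) 0) (pcoord (phi x) 1) = g2 (pcoord x 2) (pcoord x 3) /\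
     f2 (pcoord (phi x) 2) (pcoord (phi x) 3) = g1 (pcoord x 0) (pcoord x 1)).
Proof.
move=> _ _ _ _ _ _ _ _ [_ symp_std] pullback_eq x.
apply: (@split_weights_eq_or_swap R (fun v w => dx1dy1 ('d phi x v) ('d phi x w))
          (fun v w => dx2dy2 ('d phi x v) ('d phi x w))).
- move=> v w; have := congr1 (fun F => F x v w) symp_std.
  by rewrite /pullback /omega_std /split_form !mul1r.
- move=> v w; have := congr1 (fun F => F x v w) pullback_eq.
  by rewrite /pullback /split_form.
- exact: plucker_dx1dy1.
- exact: plucker_dx2dy2.
Qed.
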